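(* If a positive-dimensional complex quasi-projective variety $X$ is pseudo Brody hyperbolic, then $X$ is not $h$-special.
   Context: $X$ is pseudo Brody hyperbolic if there is a proper Zariski closed subset $E\subsetneq X$ such that every non-constant holomorphic map $f:\mathbb{C}\to X$ satisfies $f(\mathbb{C})\subset E$. For $x,y\in X$, $x\sim y$ iff there exist holomorphic maps $f_1,\dots,f_l:\mathbb{C}\to X$ such that, with $Z_i$ the Zariski closure of $f_i(\mathbb{C})$, $x\in Z_1$, $Z_i\cap Z_{i+1}\ne\emptyset$ for $1\le i<l$, and $y\in Z_l$; $X$ is $h$-special iff $\{(x,y):x\sim y\}$ is Zariski dense in $X\times X$. *)

From HB Require Import structures.
From mathcomp Require Import all_boot all_order all_algebra.
From mathcomp Require Import mpoly.
From mathcomp Require Import all_classical all_reals all_analysis.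
From mathcomp Require Import Rstruct Rstruct_topology.
From mathcomp Require Import complex.
Set Implicit Arguments. Unset Strict Implicit. Unset Printing Implicit Defensive.
Import Order.TTheory GRing.Theory Num.Theory.
Import numFieldTopology.Exports numFieldNormedType.Exports.
Local Open Scope ring_scope.
Local Open Scope classical_set_scope.

(* The complex numbers: complex closure R[i] of Stdlib's real numbers.  The
   topology / norm on CC^o is the one given by the complex modulus. *)
Definition CC : numClosedFieldType := complex Rdefinitions.R.

(* A point of P^N is
   represented by any nonzero vector; all subsets of P^N considered below are
   cones (stable under nonzero scaling), so they are sets of representatives. *)
Definition Vec (N : nat) := 'I_N.+1 -> CC.

Definition nonzero_vec N (v : Vec N) : Prop := exists i, v i != 0.

Definition same_point N (v w : Vec N) : Prop :=
  exists c : CC, c != 0 /\ forall i, w i = c * v i.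

Notation hpoly N := (mpoly.mpoly N.+1 CC).

Definition homogeneous N (p : hpoly N) : Prop :=
  exists d : nat, forall m, m \in mpoly.msupp p -> mpoly.mdeg m = d.

Definition zero_locus N (S : set (hpoly N)) : set (Vec N) :=
  [set v | nonzero_vec v /\ forall p, S p -> mpoly.meval v p = 0].

Definition zclosed N (A : set (Vec N)) : Prop :=
  exists S : set (hpoly N), (forall p, S p -> homogeneous p) /\ A = zero_locus S.

Definition zclosed_in N (X E : set (Vec N)) : Prop :=
  exists A, zclosed A /\ E = X `&` A.

Definition zclosure_in N (X T : set (Vec N)) : set (Vec N) :=
  [set v | X v /\ forall A, zclosed A -> T `<=` A -> A v].

Definition zirreducible N (Z : set (Vec N)) : Prop :=
  Z !=set0 /\
  forall A1 A2, zclosed A1 -> zclosed A2 -> Z `<=` A1 `|` A2 ->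
    Z `<=` A1 \/ Z `<=` A2.

Definition quasi_projective_variety N (X : set (Vec N)) : Prop :=
  (exists A B, zclosed A /\ zclosed B /\ X = A `\` B) /\ zirreducible X.

(* dim X >= 1 (Krull dimension of the Zariski topological space X): there is
   a strict chain Z0 < Z1 of irreducible closed subsets of X *)
Definition positive_dimensional N (X : set (Vec N)) : Prop :=
  exists Z0 Z1, zclosed_in X Z0 /\ zclosed_in X Z1 /\ zirreducible Z0 /\
    zirreducible Z1 /\ Z0 `<=` Z1 /\ Z0 <> Z1.

(* f : C -> P^N (given by representatives f z) is holomorphic: near every
   point it has a local holomorphic lift to C^(N+1) \ {0}. *)
Definition holomorphic_P N (f : CC -> Vec N) : Prop :=
  (forall z, nonzero_vec (f z)) /\
  forall z0 : CC, exists (U : set CC) (G : CC -> Vec N),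
    open (U : set CC^o) /\ U z0 /\
    forall z, U z ->
      nonzero_vec (G z) /\ same_point (G z) (f z) /\
      forall i, derivable ((fun w => G w i) : CC^o -> CC^o) z 1.

Definition holo_into N (X : set (Vec N)) (f : CC -> Vec N) : Prop :=
  holomorphic_P f /\ forall z, X (f z).

Definition nonconstant N (f : CC -> Vec N) : Prop :=
  exists z w, ~ same_point (f z) (f w).

Definition pseudo_Brody_hyperbolic N (X : set (Vec N)) : Prop :=
  exists E, zclosed_in X E /\ (exists x, X x /\ ~ E x) /\
    forall f, holo_into X f -> nonconstant f -> forall z, E (f z).

Definition h_rel N (X : set (Vec N)) (x y : Vec N) : Prop :=
  exists (l : nat) (fs : nat -> CC -> Vec N),
    (0 < l)%N /\ (forall i, (i < l)%N -> holo_into X (fs i)) /\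
    let Z i := zclosure_in X (range (fs i)) in
    Z 0%N x /\
    (forall i, (i.+1 < l)%N -> Z i `&` Z i.+1 !=set0) /\
    Z l.-1 y.

(* Zariski topology on P^N x P^N: zero loci of bihomogeneous polynomials in
   the 2(N+1) variables (x_0..x_N, y_0..y_N). *)
Notation bipoly N := (mpoly.mpoly (N.+1 + N.+1) CC).

Definition pair_vec N (x y : Vec N) : 'I_(N.+1 + N.+1) -> CC :=
  fun k => match fintype.split k with inl i => x i | inr j => y j end.

Definition bihomogeneous N (p : bipoly N) : Prop :=
  exists d1 d2 : nat, forall m, m \in mpoly.msupp p ->
    (\sum_(i < N.+1) m (lshift N.+1 i))%N = d1 /\
    (\sum_(j < N.+1) m (rshift N.+1 j))%N = d2.

Definition zdense_in_square N (X : set (Vec N)) (R : Vec N -> Vec N -> Prop) :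
  Prop :=
  forall S : set (bipoly N), (forall p, S p -> bihomogeneous p) ->
    (forall x y, X x -> X y -> R x y -> forall p, S p ->
       mpoly.meval (pair_vec x y) p = 0) ->
    forall x y, X x -> X y -> forall p, S p -> mpoly.meval (pair_vec x y) p = 0.

Definition h_special N (X : set (Vec N)) : Prop :=
  zdense_in_square X (h_rel X).

From HB Require Import structures.
From mathcomp Require Import all_boot all_algebra.
From mathcomp Require Import mpoly.
From mathcomp Require Import all_classical.
From mathcomp Require Import ring.
Set Implicit Arguments. Unset Strict Implicit. Unset Printing Implicit Defensive.
Import GRing.Theory.
Local Open Scope ring_scope.
Local Open Scope classical_set_scope.

(* Let E = X ∩ A be the exceptional set.  The Zariski closure of a
   non-constant entire curve lies in A, and that of a constant one is a single
   point; hence a chain of such closures starting at a point x outside A never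
   leaves the point x, i.e. x ~ y forces [x] = [y].  Since X is irreducible of
   positive dimension, X \ A contains two distinct points x, y.  Picking
   p, q in the ideal of A with p(x) <> 0 and q(y) <> 0, the bihomogeneous
   polynomial p(x') q(y') (x'_i y'_j - x'_j y'_i) vanishes on the graph of ~
   but not at (x, y), so ~ is not Zariski dense in X x X. *)

Lemma meval_dhomog_scale n (R : comNzRingType) (p : {mpoly R[n]}) d c
    (v : 'I_n -> R) :
  p \is d.-homog -> p.@[fun i => c * v i] = c ^+ d * p.@[v].
Proof.
move=> /dhomogP hp; rewrite !mevalE mulr_sumr big_seq [RHS]big_seq.
apply: eq_bigr => m /hp <-; rewrite mulrCA; congr (_ * _).
by rewrite /= mdegE -prodrXr -big_split; apply: eq_bigr => i _; rewrite exprMn.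
Qed.

Lemma homogeneous_dhomog N (p : hpoly N) :
  homogeneous p -> exists d, p \is d.-homog.
Proof. by case=> d hd; exists d; apply/dhomogP => m /hd. Qed.

Section Proportional.
Variable N : nat.
Implicit Types u v w c : Vec N.

Definition proportional u v := forall i j, u i * v j = u j * v i.

Lemma same_point_proportional u v : same_point u v -> proportional u v.
Proof. by case=> c [_ h] i j; rewrite !h; ring. Qed.

Lemma proportional_sym u v : proportional u v -> proportional v u.
Proof. by move=> h i j; rewrite mulrC -h mulrC. Qed.

Lemma proportional_trans v u w :
  nonzero_vec v -> proportional u v -> proportional v w -> proportional u w.
Proof.
case=> k vk huv hvw i j; apply: (mulIf (mulf_neq0 vk vk)).
have -> : u i * w j * (v k * v k) = (u i * v k) * (v k * w j) by ring.
have -> : u j * w i * (v k * v k) = (u j * v k) * (v k * w i) by ring.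
by rewrite (huv i k) (huv j k) (hvw k j) (hvw k i); ring.
Qed.

Lemma proportional_scale u v :
  nonzero_vec v -> proportional u v -> exists c : CC, forall i, u i = c * v i.
Proof. by case=> k vk h; exists (u k / v k) => i; rewrite mulrAC -h mulfK. Qed.

Lemma zclosed_cone (A : set (Vec N)) u v :
  zclosed A -> A v -> nonzero_vec u -> proportional u v -> A u.
Proof.
case=> S [hS ->] [nzv hv] nzu huv; split => // p Sp.
have [c hc] := proportional_scale nzv huv.
have [d hd] := homogeneous_dhomog (hS p Sp).
by rewrite (meval_eq _ hc) (meval_dhomog_scale _ _ hd) hv // mulr0.
Qed.

Lemma zero_locus_nonvanishing (S : set (hpoly N)) v :
  nonzero_vec v -> ~ zero_locus S v -> exists2 p, S p & meval v p != 0.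
Proof.
move=> nzv nSv; apply: contra_notP nSv => h; split => // p Sp.
by apply/eqP; apply: contra_notP h => /negP; exists p.
Qed.

Definition minor_poly c i j : hpoly N := c i *: 'X_j - c j *: 'X_i.

Lemma meval_minor_poly c i j v :
  meval v (minor_poly c i j) = c i * v j - c j * v i.
Proof. by rewrite mevalB !mevalZ !mevalXU. Qed.

(* The point [c] of P^N when c is nonzero; zpoint 0 is all of P^N. *)
Definition zpoint c := zero_locus [set p | exists i j, p = minor_poly c i j].

Lemma zclosed_zpoint c : zclosed (zpoint c).
Proof.
exists [set p | exists i j, p = minor_poly c i j]; split => // _ [i [j ->]].
exists 1%N; apply/dhomogP.
by rewrite rpredB // rpredZ // dhomogX /= mdeg1.
Qed.

Lemma zpointP c v : zpoint c v <-> nonzero_vec v /\ proportional c v.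
Proof.
split=> [[nzv h]|[nzv h]]; split => //.
  move=> i j; apply/eqP; rewrite -subr_eq0 -meval_minor_poly.
  by apply/eqP/h; exists i, j.
by move=> _ [i [j ->]]; rewrite meval_minor_poly h subrr.
Qed.

End Proportional.

Section EntireCurves.
Variables (N : nat) (X A : set (Vec N)).
Hypothesis zclosedA : zclosed A.
Hypothesis X_nonzero : forall v, X v -> nonzero_vec v.
Hypothesis nonconstant_in_A :
  forall f, holo_into X f -> nonconstant f -> forall z, A (f z).

Lemma zclosure_curve_cases f : holo_into X f ->
  zclosure_in X (range f) `<=` A \/
  exists2 c, nonzero_vec c & zclosure_in X (range f) `<=` proportional c.
Proof.
move=> hf; have [nc|c] := pselect (nonconstant f).
  left => v [_ hv]; apply: hv zclosedA _ => _ [z _ <-].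
  exact: nonconstant_in_A.
right; exists (f 0); first exact: hf.1.1.
move=> v [_ hv]; suff /zpointP[] : zpoint (f 0) v by [].
apply: hv (zclosed_zpoint _) _ => _ [z _ <-]; apply/zpointP.
split; first exact: hf.1.1.
by apply: same_point_proportional; apply: contra_notP c; exists 0, z.
Qed.

Lemma h_rel_proportional x y :
  X x -> ~ A x -> h_rel X x y -> proportional x y.
Proof.
move=> Xx nAx [l [fs [l_gt0 [hfs [Z0x [Zmeet Zly]]]]]].
suff chain i : (i < l)%N -> zclosure_in X (range (fs i)) `<=` proportional x.
  by apply: chain Zly; rewrite prednK.
elim: i => [|i IH] lt_il v Zv.
  case: (zclosure_curve_cases (hfs 0%N lt_il)) => [sub|[c nzc sub]].
    by case: nAx; apply: sub.
  exact: proportional_trans nzc (proportional_sym (sub _ Z0x)) (sub _ Zv).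
have [w [Ziw ZSiw]] := Zmeet i lt_il.
have xw := IH (ltnW lt_il) w Ziw.
case: (zclosure_curve_cases (hfs _ lt_il)) => [sub|[c nzc sub]].
  by case: nAx; apply: zclosed_cone zclosedA (sub _ ZSiw) (X_nonzero Xx) xw.
have xc := proportional_trans (X_nonzero Ziw.1) xw (proportional_sym (sub _ ZSiw)).
exact: proportional_trans nzc xc (sub _ Zv).
Qed.

End EntireCurves.

Lemma positive_dimensional_not_point N (X : set (Vec N)) c :
  positive_dimensional X -> (forall v, X v -> nonzero_vec v) ->
  nonzero_vec c -> ~ X `<=` zpoint c.
Proof.
move=> [Z0 [Z1 [[A0 [cA0 ->]] [[A1 [_ ->]] [[[v [Xv A0v]] _] [_ [sub ne]]]]]]].
move=> X_nonzero nzc Xc; apply: ne; apply/seteqP; split => // u [Xu _].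
split => //; apply: zclosed_cone cA0 A0v (X_nonzero u Xu) _.
have [_ cu] := (zpointP _ _).1 (Xc u Xu).
have [_ cv] := (zpointP _ _).1 (Xc v Xv).
exact: proportional_trans nzc (proportional_sym cu) cv.
Qed.

Lemma two_points_outside N (X A : set (Vec N)) :
  quasi_projective_variety X -> positive_dimensional X -> zclosed A ->
  (forall v, X v -> nonzero_vec v) -> ~ X `<=` A ->
  exists x y, [/\ X x, X y, ~ A x, ~ A y & ~ proportional x y].
Proof.
move=> [_ irrX] pdX zclosedA X_nonzero XnA.
have [x0 [Xx0 nAx0]] : exists x0, X x0 /\ ~ A x0.
  by apply: contra_notP XnA => h u Xu; apply: contra_notP h => nAu; exists u.
apply: contra_notP (positive_dimensional_not_point pdX X_nonzero (X_nonzero _ Xx0)).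
move=> h; have : X `<=` A `|` zpoint x0.
  move=> u Xu; have [Au|nAu] := pselect (A u); [by left | right].
  apply/zpointP; split; first exact: X_nonzero.
  by apply: contra_notP h => ?; exists x0, u.
by case/(irrX.2 _ _ zclosedA (zclosed_zpoint x0)).
Qed.

Lemma comp_mpoly_dhomog n k (R : nzRingType) (mf : mpoly.Measure.type k)
    (lq : n.-tuple {mpoly R[k]}) e d (p : {mpoly R[n]}) :
  (forall i, tnth lq i \is e.-homog for mf) -> p \is d.-homog ->
  p \mPo lq \is (e * d).-homog for mf.
Proof.
move=> hlq /dhomogP hp; rewrite comp_mpolyEX big_seq; apply: rpred_sum => m /hp <-.
apply: rpredZ; rewrite comp_mpolyX /= mdegE big_distrr /=.
elim/big_rec2: _ => [|i d' q _ hq]; first exact: dhomog1.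
exact/dhomogM/hq/dhomogMn.
Qed.

Section BlockDegrees.
Variables m n : nat.
Implicit Type mu : 'X_{1..m + n}.

Definition mdegl mu := (\sum_(i < m) mu (lshift n i))%N.
Definition mdegr mu := (\sum_(j < n) mu (rshift m j))%N.

Lemma mdegl0 : mdegl 0%MM = 0%N.
Proof. by rewrite /mdegl big1 // => i _; rewrite mnm0E. Qed.

Lemma mdeglD : {morph mdegl : mu1 mu2 / (mu1 + mu2)%MM >-> (mu1 + mu2)%N}.
Proof. by move=> mu1 mu2; rewrite /mdegl -big_split; apply: eq_bigr => i _; rewrite mnmDE. Qed.

Lemma mdegr0 : mdegr 0%MM = 0%N.
Proof. by rewrite /mdegr big1 // => i _; rewrite mnm0E. Qed.

Lemma mdegrD : {morph mdegr : mu1 mu2 / (mu1 + mu2)%MM >-> (mu1 + mu2)%N}.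
Proof. by move=> mu1 mu2; rewrite /mdegr -big_split; apply: eq_bigr => i _; rewrite mnmDE. Qed.

HB.instance Definition _ := mpoly.isMeasure.Build (m + n) mdegl mdegl0 mdeglD.
HB.instance Definition _ := mpoly.isMeasure.Build (m + n) mdegr mdegr0 mdegrD.

Lemma lshift_neq_rshift (i : 'I_m) (j : 'I_n) : (lshift n i == rshift m j) = false.
Proof. by apply/negbTE; rewrite -val_eqE /= neq_ltn ltn_addr. Qed.

Lemma mdegl_lshift i : mdegl U_(lshift n i) = 1%N.
Proof.
rewrite /mdegl (bigD1 i) //= mnm1E eqxx big1 // => j ne_ji.
by rewrite mnm1E (inj_eq (@lshift_inj _ _)) eq_sym (negbTE ne_ji).
Qed.

Lemma mdegr_rshift j : mdegr U_(rshift m j) = 1%N.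
Proof.
rewrite /mdegr (bigD1 j) //= mnm1E eqxx big1 // => i ne_ij.
by rewrite mnm1E (inj_eq (@rshift_inj _ _)) eq_sym (negbTE ne_ij).
Qed.

Lemma mdegl_rshift j : mdegl U_(rshift m j) = 0%N.
Proof. by rewrite /mdegl big1 // => i _; rewrite mnm1E eq_sym lshift_neq_rshift. Qed.

Lemma mdegr_lshift i : mdegr U_(lshift n i) = 0%N.
Proof. by rewrite /mdegr big1 // => j _; rewrite mnm1E lshift_neq_rshift. Qed.

Variable R : comNzRingType.

Definition lvars : m.-tuple {mpoly R[m + n]} := [tuple 'X_(lshift n i) | i < m].
Definition rvars : n.-tuple {mpoly R[m + n]} := [tuple 'X_(rshift m j) | j < n].

Lemma meval_comp_lvars (p : {mpoly R[m]}) w :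
  (p \mPo lvars).@[w] = p.@[fun i => w (lshift n i)].
Proof. by rewrite comp_mpoly_meval; apply: meval_eq => i; rewrite tnth_mktuple mevalXU. Qed.

Lemma meval_comp_rvars (q : {mpoly R[n]}) w :
  (q \mPo rvars).@[w] = q.@[fun j => w (rshift m j)].
Proof. by rewrite comp_mpoly_meval; apply: meval_eq => j; rewrite tnth_mktuple mevalXU. Qed.

Lemma comp_lvars_dhomog (p : {mpoly R[m]}) d : p \is d.-homog ->
  p \mPo lvars \is d.-homog for mdegl /\ p \mPo lvars \is 0.-homog for mdegr.
Proof.
move=> hp; split; [rewrite -[d]mul1n; apply: comp_mpoly_dhomog hp |
  apply: (comp_mpoly_dhomog (e := 0%N) _ hp)] => i;
  by rewrite tnth_mktuple dhomogX /= ?mdegl_lshift ?mdegr_lshift.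
Qed.

Lemma comp_rvars_dhomog (q : {mpoly R[n]}) d : q \is d.-homog ->
  q \mPo rvars \is 0.-homog for mdegl /\ q \mPo rvars \is d.-homog for mdegr.
Proof.
move=> hq; split; [apply: (comp_mpoly_dhomog (e := 0%N) _ hq) |
  rewrite -[d]mul1n; apply: comp_mpoly_dhomog hq] => j;
  by rewrite tnth_mktuple dhomogX /= ?mdegl_rshift ?mdegr_rshift.
Qed.

End BlockDegrees.

Section SeparatingPolynomial.
Variables (n : nat) (R : comNzRingType).
Implicit Types (p q : {mpoly R[n]}) (i j : 'I_n) (w : 'I_(n + n) -> R).

Definition cross_minor i j : {mpoly R[n + n]} :=
  'X_(lshift n i) * 'X_(rshift n j) - 'X_(lshift n j) * 'X_(rshift n i).

Definition separating_poly p q i j :=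
  (p \mPo lvars n n R) * (q \mPo rvars n n R) * cross_minor i j.

Lemma cross_minor_dhomog i j :
  cross_minor i j \is 1.-homog for (@mdegl n n) /\
  cross_minor i j \is 1.-homog for (@mdegr n n).
Proof.
split; [rewrite -[1%N]/(1 + 0)%N | rewrite -[1%N]/(0 + 1)%N];
  by rewrite rpredB // dhomogM // dhomogX /=
    ?mdegl_lshift ?mdegl_rshift ?mdegr_lshift ?mdegr_rshift.
Qed.

Lemma separating_poly_dhomog p q dp dq i j :
  p \is dp.-homog -> q \is dq.-homog ->
  separating_poly p q i j \is (dp + 1).-homog for (@mdegl n n) /\
  separating_poly p q i j \is (dq + 1).-homog for (@mdegr n n).
Proof.
move=> hp hq; have [pl pr] := @comp_lvars_dhomog n n R _ _ hp.
have [ql qr] := @comp_rvars_dhomog n n R _ _ hq; have [cl cr] := cross_minor_dhomog i j.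
split; [rewrite -(addn0 dp) | rewrite -(add0n dq)].
  exact: dhomogM (dhomogM pl ql) cl.
exact: dhomogM (dhomogM pr qr) cr.
Qed.

Lemma meval_separating_poly p q i j w :
  (separating_poly p q i j).@[w] =
  p.@[fun k => w (lshift n k)] * q.@[fun k => w (rshift n k)] *
  (w (lshift n i) * w (rshift n j) - w (lshift n j) * w (rshift n i)).
Proof. by rewrite !mevalM meval_comp_lvars meval_comp_rvars mevalB !mevalM !mevalXU. Qed.

End SeparatingPolynomial.

Lemma pair_vec_lshift N (x y : Vec N) i : pair_vec x y (lshift N.+1 i) = x i.
Proof. by rewrite /pair_vec (unsplitK (inl _ i)). Qed.

Lemma pair_vec_rshift N (x y : Vec N) j : pair_vec x y (rshift N.+1 j) = y j.
Proof. by rewrite /pair_vec (unsplitK (inr _ j)). Qed.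

Lemma meval_separating_poly_pair N (p q : hpoly N) i j (x y : Vec N) :
  meval (pair_vec x y) (separating_poly p q i j) =
  meval x p * meval y q * (x i * y j - x j * y i).
Proof.
rewrite meval_separating_poly !pair_vec_lshift !pair_vec_rshift.
by congr (_ * _ * _); apply: meval_eq => k; rewrite ?pair_vec_lshift ?pair_vec_rshift.
Qed.

Lemma bihomogeneous_separating_poly N (p q : hpoly N) i j :
  homogeneous p -> homogeneous q -> bihomogeneous (separating_poly p q i j).
Proof.
move=> /homogeneous_dhomog[dp hp] /homogeneous_dhomog[dq hq].
have [/dhomogP hl /dhomogP hr] := separating_poly_dhomog i j hp hq.
exists (dp + 1)%N, (dq + 1)%N => mu supp_mu.
by split; [exact: hl | exact: hr].
Qed.

Lemma quasi_projective_nonzero N (X : set (Vec N)) v :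
  quasi_projective_variety X -> X v -> nonzero_vec v.
Proof. by case=> [[A [B [[S [_ ->]] [_ ->]]]] _] [[]]. Qed.

Theorem lemma4p6 (N : nat) (X : set (Vec N)) :
  quasi_projective_variety X -> positive_dimensional X ->
  pseudo_Brody_hyperbolic X -> ~ h_special X.
Proof.
move=> qpvX pdX [_ [[A [zclosedA ->]] [[x0 [Xx0 nEx0]] curves_in_E]]] hspecial.
have X_nonzero v : X v -> nonzero_vec v by apply: quasi_projective_nonzero.
have XnA : ~ X `<=` A by move=> XA; apply: nEx0; split; last exact: XA.
have [x [y [Xx Xy nAx nAy npxy]]] :=
  two_points_outside qpvX pdX zclosedA X_nonzero XnA.
have curves_in_A f hf nc z : A (f z) := (curves_in_E f hf nc z).2.
have [S [homS defA]] := zclosedA; rewrite defA in nAx nAy.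
have [p Sp px] := zero_locus_nonvanishing (X_nonzero _ Xx) nAx.
have [q Sq qy] := zero_locus_nonvanishing (X_nonzero _ Xy) nAy.
have [i [j xy_ij]] : exists i j, x i * y j != x j * y i.
  apply: contra_notP npxy => h i j; apply/eqP.
  by apply: contra_notP h => /negP; exists i, j.
pose P := separating_poly p q i j.
have P_vanishes x' y' : X x' -> X y' -> h_rel X x' y' ->
    forall P', [set P] P' -> meval (pair_vec x' y') P' = 0.
  move=> Xx' _ rxy _ ->; rewrite meval_separating_poly_pair.
  have [|nAx'] := pselect (A x'); first by rewrite defA => -[_ ->] //; rewrite !mul0r.
  have [|nAy'] := pselect (A y'); first by rewrite defA => -[_ ->] //; rewrite mulr0 mul0r.
  by rewrite (h_rel_proportional zclosedA X_nonzero curves_in_A Xx' nAx' rxy) subrr mulr0.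
have bihomP P' : [set P] P' -> bihomogeneous P'.
  by move=> ->; apply: bihomogeneous_separating_poly; apply: homS.
have /eqP := hspecial _ bihomP P_vanishes x y Xx Xy P erefl.
by rewrite meval_separating_poly_pair !mulf_eq0 subr_eq0 (negbTE px) (negbTE qy) (negbTE xy_ij).
Qed.
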